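(* Let $\mathcal{M}$ and $\mathcal{N}$ be matroids on the same finite ground set $V$, and let $k\ge1$ be an integer. If $r(\mathcal{M}[X])+r(\mathcal{N}[V\setminus X])\ge k+1$ for all $X\subseteq V$ for which $V\setminus X$ is a flat of $\mathcal{N}$ of rank at most $k-1$, then $\mathbf{RG}(\mathcal{M},\mathcal{N};k)$ is connected.
   Context: $\mathcal{M}[X]=\{A\in\mathcal{M}:A\subseteq X\}$ and $r$ is matroid rank. A flat of $\mathcal{N}$ is $F\subseteq V$ with $r(\mathcal{N}[F\cup\{x\}])>r(\mathcal{N}[F])$ for every $x\in V\setminus F$. $\mathbf{RG}(\mathcal{M},\mathcal{N};k)$ is the graph whose vertices are the common independent sets of $\mathcal{M}$ and $\mathcal{N}$ of cardinality $k$, two such sets $S,T$ being adjacent if $S\cup T$ is an independent set of $\mathcal{M}$ of cardinality $k+1$. *)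

From mathcomp Require Import all_boot.
Set Implicit Arguments. Unset Strict Implicit. Unset Printing Implicit Defensive.

(* A matroid on the finite ground set V := [set: T], given by its independent sets. *)
Record matroid (T : finType) := Matroid {
  indep : pred {set T};
  indep0 : indep set0;
  indep_sub : forall A B : {set T}, B \subset A -> indep A -> indep B;
  indep_aug : forall A B : {set T}, indep A -> indep B -> #|A| < #|B| ->
     exists2 x, x \in B :\: A & indep (x |: A)
}.

Definition restrict (T : finType) (M : matroid T) (X : {set T}) : pred {set T} :=
  [pred A | indep M A && (A \subset X)].

Definition famrank (T : finType) (F : pred {set T}) : nat :=
  \max_(A : {set T} | F A) #|A|.

Definition flat (T : finType) (N : matroid T) (F : {set T}) : Prop :=
  forall x : T, x \notin F ->
    famrank (restrict N F) < famrank (restrict N (x |: F)).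

Definition rg_vertex (T : finType) (M N : matroid T) (k : nat) (S : {set T}) : bool :=
  [&& indep M S, indep N S & #|S| == k].

Definition rg_adj (T : finType) (M N : matroid T) (k : nat) : rel {set T} :=
  fun S U => [&& rg_vertex M N k S, rg_vertex M N k U,
                 indep M (S :|: U) & #|S :|: U| == k.+1].

Definition rg_connected (T : finType) (M N : matroid T) (k : nat) : Prop :=
  forall S U : {set T}, rg_vertex M N k S -> rg_vertex M N k U ->
    connect (rg_adj M N k) S U.

(* Suppose RG(M,N;k) is disconnected and choose vertices S, U in different
   components with |S :&: U| maximal.  Maximality rules out every exchange that
   would bring S and U closer: no b in U :\: S keeps S + b M-independent, and no
   x outside S with S + x M-independent makes the swap S - y + x N-independent
   for y in S :\: U.  The second fact propagates along chains of exchanges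
   y' -> y (some x outside S with S - y + x M-independent and S - y' + x
   N-independent): by induction on the length of the chain, replacing the pair
   by the equally extremal pair (S - y + x, U - y + x).  Let R be the part of S
   reachable from S :\: U and A := S :\: R.  Then no x outside S augments both
   A in N and S :&: R in M, so the N-closure G of A is a flat of N-rank
   |A| < k whose complement has M-rank at most |S :&: R| = k - |A|; the rank
   condition for X = ~: G is violated. *)

From mathcomp Require Import all_boot zify.
From mathcomp Require Import boolp.
Set Implicit Arguments. Unset Strict Implicit. Unset Printing Implicit Defensive.

Section MatroidFacts.
Variables (T : finType) (M : matroid T).
Implicit Types (A B S W X : {set T}) (x y z : T).

Lemma indep_extend A B : indep M A -> indep M B -> #|A| <= #|B| ->
  exists W, [/\ indep M W, A \subset W, W \subset A :|: B & #|W| = #|B|].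
Proof.
move=> iA iB; move Hn: (#|B| - #|A|) => n; elim: n A iA Hn => [|n IH] A iA Hn leAB.
  exists A; split=> //; first exact: subsetUl.
  by apply/eqP; rewrite eqn_leq leAB /= -subn_eq0 Hn.
have [x /setDP [xB xA] ixA] := indep_aug iA iB (ltac:(lia)).
have cxA : #|x |: A| = #|A|.+1 by rewrite cardsU1 xA.
have [W [iW sAW sWB cW]] := IH (x |: A) ixA (ltac:(lia)) (ltac:(lia)).
exists W; split=> //; first exact: subset_trans (subsetU1 x A) sAW.
apply: (subset_trans sWB); apply/subsetP=> z; rewrite !inE.
by case/orP=> [/orP [/eqP ->|->]|->]; rewrite ?xB ?orbT.
Qed.

Lemma cards_swap S x y : x \notin S -> y \in S -> #|x |: (S :\ y)| = #|S|.
Proof.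
by move=> xS yS; rewrite cardsU1 in_setD1 (negbTE xS) andbF (cardsD1 y S) yS.
Qed.

Lemma indep_swap_of_proper S B x : indep M S -> x \notin S -> B \proper S ->
  indep M (x |: B) -> exists2 y, y \in S :\: B & indep M (x |: (S :\ y)).
Proof.
move=> iS xS; rewrite properEcard => /andP [sBS ltBS] ixB.
have cxB : #|x |: B| <= #|S| by have := leq_b1 (x \notin B); rewrite cardsU1; lia.
have [W [iW sxBW sW cW]] := indep_extend ixB iS cxB.
have sWxS : W \subset x |: S by rewrite -setUA (setUidPr sBS) in sW.
have /properP [_ [y yxS yW]] : W \proper x |: S.
  by rewrite properEcard sWxS cW cardsU1 xS add1n ltnSn.
have xW : x \in W by apply: (subsetP sxBW); rewrite setU11.
have yS : y \in S by case/setU1P: yxS yW => [->|//]; rewrite xW.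
exists y.
  by rewrite in_setD yS andbT; apply: contra yW => yB; apply: (subsetP sxBW); rewrite setU1r.
suff /eqP <- : W == x |: (S :\ y) by [].
rewrite eqEcard cards_swap // cW leqnn andbT; apply/subsetP => z zW.
rewrite !inE; case/setU1P: (subsetP sWxS z zW) => [->|zS]; first by rewrite eqxx.
by rewrite zS andbT; apply/orP; right; apply: contraNneq yW => <-.
Qed.

Lemma indep_aug_other A B x z : indep M A -> indep M B -> #|A| < #|B| ->
  B :\: A \subset [set x; z] -> ~~ indep M (z |: A) -> indep M (x |: A).
Proof.
move=> iA iB ltAB sBA nzA; have [e eBA ieA] := indep_aug iA iB ltAB.
by case/set2P: (subsetP sBA e eBA) ieA => -> // ieA; rewrite ieA in nzA.
Qed.

Lemma indep_swap_extend S x0 x y : x0 \notin S -> x \notin S -> y \in S ->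
  indep M (x0 |: S) -> ~~ indep M (x |: S) -> indep M (x |: (S :\ y)) ->
  indep M (x0 |: (x |: (S :\ y))).
Proof.
move=> x0S xS yS ix0S nixS ixSy.
apply: (indep_aug_other (z := y) ixSy ix0S); last by rewrite setUCA setD1K.
  by rewrite cards_swap // cardsU1 x0S.
by apply/subsetP => z; rewrite !inE; do 3 case: eqP => //=; case: (z \in S).
Qed.

Lemma indep_swap_exchange S x0 x y1 y : x0 \notin S -> x \notin S ->
  y1 \in S -> y \in S -> y1 != y ->
  indep M (x0 |: (S :\ y1)) -> indep M (x |: (S :\ y)) -> ~~ indep M (x0 |: (S :\ y)) ->
  indep M (x |: ((x0 |: (S :\ y1)) :\ y)).
Proof.
move=> x0S xS y1S yS y1y ix0S1 ixSy nix0Sy.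
have x0y : x0 != y by apply: contraNneq x0S => ->.
apply: (indep_aug_other (z := y1) (indep_sub (subD1set _ _) ix0S1) ixSy).
- rewrite cards_swap // -(cards_swap x0S y1S) (cardsD1 y (x0 |: (S :\ y1))).
  by rewrite !inE [y == y1]eq_sym y1y yS orbT add1n ltnSn.
- by apply/subsetP => z; rewrite !inE; do 4 case: eqP => //=; case: (z \in S).
apply: contra nix0Sy => iy1.
suff <- : y1 |: ((x0 |: (S :\ y1)) :\ y) = x0 |: (S :\ y) by [].
apply/setP => z; rewrite !inE; have [->|zy1] := eqVneq z y1; first by rewrite y1y y1S orbT.
by have [->|//] := eqVneq z x0; rewrite x0y.
Qed.

Definition span A := [set x | (x \in A) || ~~ indep M (x |: A)].

Lemma famrank_ge A X : indep M A -> A \subset X -> #|A| <= famrank (restrict M X).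
Proof. by move=> iA sAX; apply: leq_bigmax_cond; rewrite /restrict /= iA sAX. Qed.

Lemma famrank_le A X : indep M A -> {in X, forall x, x \notin A -> ~~ indep M (x |: A)} ->
  famrank (restrict M X) <= #|A|.
Proof.
move=> iA nX; apply/bigmax_leqP => B /andP [iB sBX]; rewrite leqNgt; apply/negP => ltAB.
have [x /setDP [xB xA] ixA] := indep_aug iA iB ltAB.
by rewrite (negbTE (nX x (subsetP sBX x xB) xA)) in ixA.
Qed.

Lemma famrank_span A : indep M A -> famrank (restrict M (span A)) <= #|A|.
Proof. by move=> iA; apply: famrank_le => // x; rewrite inE => /orP [->|]. Qed.

Lemma flat_span A : indep M A -> flat M (span A).
Proof.
move=> iA x; rewrite inE negb_or negbK => /andP [xA ixA].
apply: leq_ltn_trans (famrank_span iA) _.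
have sAspan : A \subset span A by apply/subsetP => z zA; rewrite inE zA.
by have := famrank_ge ixA (setUS [set x] sAspan); rewrite cardsU1 xA add1n.
Qed.
End MatroidFacts.

Section ExchangeGraph.
Variables (T : finType) (M N : matroid T) (k : nat).
Implicit Types (S U W P Q : {set T}) (x y : T).
Local Notation vtx := (rg_vertex M N k).
Local Notation adj := (rg_adj M N k).

Lemma vtx_card S : vtx S -> #|S| = k.
Proof. by case/and3P=> _ _ /eqP. Qed.

Lemma vtx_properI S U : vtx S -> vtx U -> S != U -> S :&: U \proper S.
Proof.
move=> vS vU nSU; rewrite properEneq subsetIl andbT; apply: contra nSU => /eqP /setIidPl sSU.
by rewrite eqEcard sSU (vtx_card vS) (vtx_card vU) leqnn.
Qed.

Lemma adj_vtxr S U : adj S U -> vtx U.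
Proof. by case/and4P. Qed.

Lemma adj_sym : symmetric adj.
Proof. by move=> S U; rewrite /rg_adj setUC; case: (vtx S); case: (vtx U). Qed.

Lemma adj_swap S x y : vtx S -> x \notin S -> y \in S ->
  indep M (x |: S) -> indep N (x |: (S :\ y)) -> adj S (x |: (S :\ y)).
Proof.
move=> vS xS yS ixS ixSy; have /and3P [iMS iNS /eqP cS] := vS.
have sub : x |: (S :\ y) \subset x |: S := setUS [set x] (subD1set S y).
rewrite /rg_adj vS /rg_vertex ixSy (indep_sub sub ixS) cards_swap // cS eqxx /=.
by rewrite setUCA (setUidPl (subD1set S y)) ixS cardsU1 xS cS add1n eqxx.
Qed.

Lemma adj_increase_overlap S U b : vtx S -> vtx U -> b \in U -> b \notin S ->
  indep M (b |: S) -> exists2 W, adj S W & #|S :&: U| < #|W :&: U|.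
Proof.
move=> vS vU bU bS ibS; have /and3P [_ iNS _] := vS; have /and3P [_ iNU _] := vU.
have pSUS : S :&: U \proper S by apply: vtx_properI vS vU _; apply: contraNneq bS => ->.
have ibSU : indep N (b |: (S :&: U)).
  by apply: indep_sub iNU; rewrite subUset sub1set bU subsetIr.
have [y /setDP [yS ySU] ibSy] := indep_swap_of_proper iNS bS pSUS ibSU.
exists (b |: (S :\ y)); first exact: adj_swap.
have sSUSy : S :&: U \subset S :\ y.
  apply/subsetP => z zSU; rewrite in_setD1 (subsetP (subsetIl S U) z zSU) andbT.
  by apply: contraNneq ySU => <-.
have : b |: (S :&: U) \subset (b |: (S :\ y)) :&: U.
  by rewrite subsetI (setUS [set b] sSUSy) subUset sub1set bU subsetIr.
by move/subset_leq_card; rewrite cardsU1 in_setI (negbTE bS) add1n.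
Qed.

Definition disconnected S U := [&& vtx S, vtx U & ~~ connect adj S U].

Definition extremal S U :=
  disconnected S U /\ forall P Q, disconnected P Q -> #|P :&: Q| <= #|S :&: U|.

Lemma exists_extremal S U : disconnected S U -> exists P Q, extremal P Q.
Proof.
move=> dSU; pose overlap (PQ : {set T} * {set T}) := #|PQ.1 :&: PQ.2|.
have [[P Q] dPQ maxPQ] := @arg_maxnP _ (S, U) [pred PQ | disconnected PQ.1 PQ.2] overlap dSU.
by exists P, Q; split=> // P' Q' dP'Q'; apply: (maxPQ (P', Q')).
Qed.

Lemma disconnected_connect S U S' U' : disconnected S U ->
  connect adj S S' -> connect adj U U' -> vtx S' -> vtx U' -> disconnected S' U'.
Proof.
case/and3P=> _ _ nSU cSS' cUU' vS' vU'; rewrite /disconnected vS' vU'.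
apply: contra nSU => cS'U'; apply: connect_trans cSS' (connect_trans cS'U' _).
by rewrite (sym_connect_sym adj_sym).
Qed.

Lemma extremal_sym S U : extremal S U -> extremal U S.
Proof.
case=> /and3P [vS vU nSU] maxSU; split; last by rewrite setIC.
by rewrite /disconnected vS vU (sym_connect_sym adj_sym).
Qed.

Lemma extremal_properI S U : extremal S U -> S :&: U \proper S.
Proof.
case=> /and3P [vS vU nSU] _; apply: vtx_properI vS vU _.
by apply: contraNneq nSU => ->; exact: connect0.
Qed.

Lemma extremal_no_augment S U b : extremal S U -> b \in U -> b \notin S ->
  ~~ indep M (b |: S).
Proof.
case=> dSU maxSU bU bS; have /and3P [vS vU _] := dSU; apply/negP => ibS.
have [W aSW ltSW] := adj_increase_overlap vS vU bU bS ibS.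
have dWU := disconnected_connect dSU (connect1 aSW) (connect0 _ U) (adj_vtxr aSW) vU.
by have := maxSU _ _ dWU; rewrite leqNgt ltSW.
Qed.

Lemma extremal_augment_both S U x : extremal S U -> x \notin S ->
  indep M (x |: S) -> x \notin U /\ indep M (x |: U).
Proof.
move=> ext xS ixS; have [/and3P [vS vU _] _] := ext.
have xU : x \notin U by apply: contraL ixS => xU; exact: extremal_no_augment ext xU xS.
split=> //; have /and3P [iMU _ _] := vU.
have ltUS : #|U| < #|x |: S| by rewrite cardsU1 xS (vtx_card vS) (vtx_card vU) add1n.
have [e /setDP [exS eU] ieU] := indep_aug iMU ixS ltUS.
case/setU1P: exS ieU => [-> //|eS] ieU.
by move: (extremal_no_augment (extremal_sym ext) eS eU); rewrite ieU.
Qed.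

Inductive reach S U : nat -> T -> Prop :=
| reach0 y : y \in S -> y \notin U -> reach S U 0 y
| reachS n y x y' : y \in S -> x \notin S -> indep M (x |: (S :\ y)) ->
    indep N (x |: (S :\ y')) -> reach S U n y' -> reach S U n.+1 y.

Definition reachable S U : {set T} := [set y | `[< exists n, reach S U n y >]].

Definition swap_free S U n := forall j y x, j <= n -> reach S U j y ->
  x \notin S -> indep M (x |: S) -> ~~ indep N (x |: (S :\ y)).

Lemma reach_mem S U n y : reach S U n y -> y \in S.
Proof. by case. Qed.

Lemma extremal_no_swap_out S U y x : extremal S U -> y \in S -> y \notin U ->
  x \notin S -> indep M (x |: S) -> ~~ indep N (x |: (S :\ y)).
Proof.
move=> ext yS yU xS ixS; have [dSU maxSU] := ext; have /and3P [vS vU _] := dSU.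
apply/negP => ixSy; have aSS' := adj_swap vS xS yS ixS ixSy.
have [xU ixU] := extremal_augment_both ext xS ixS.
have [W aUW ltW] := adj_increase_overlap vU (adj_vtxr aSS') (setU11 x _) xU ixU.
have dS'W := disconnected_connect dSU (connect1 aSS') (connect1 aUW)
  (adj_vtxr aSS') (adj_vtxr aUW).
have : S :&: U \subset U :&: (x |: (S :\ y)).
  apply/subsetP => z; rewrite !inE => /andP [zS zU]; rewrite zU zS andbT /=.
  by apply/orP; right; apply: contraNneq yU => <-.
move/subset_leq_card => leSU.
have := leq_ltn_trans (leq_trans (maxSU _ _ dS'W) leSU) ltW.
by rewrite setIC ltnn.
Qed.

Lemma extremal_swap_indep S U x0 y1 : extremal S U -> x0 \notin S ->
  indep M (x0 |: S) -> y1 \in U -> indep N (x0 |: (S :\ y1)) ->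
  indep N (x0 |: (U :\ y1)).
Proof.
move=> ext x0S ix0S y1U ix0Sy1; have [/and3P [vS vU _] _] := ext.
have /and3P [_ iNS _] := vS; have /and3P [_ iNU _] := vU.
have [x0U _] := extremal_augment_both ext x0S ix0S.
have pZU : (S :&: U) :\ y1 \proper U.
  apply/properP; split; last by exists y1; rewrite ?in_setD1 ?eqxx.
  exact: subset_trans (subD1set _ _) (subsetIr S U).
have ix0Z : indep N (x0 |: ((S :&: U) :\ y1)).
  exact: indep_sub (setUS _ (setSD _ (subsetIl S U))) ix0Sy1.
have [y /setDP [yU yZ] ix0Uy] := indep_swap_of_proper iNU x0U pZU ix0Z.
have [<- //|yy1] := eqVneq y y1.
have yS : y \notin S by move: yZ; rewrite !inE yy1 yU andbT.
have ix0SU : indep N (x0 |: (S :&: U)).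
  apply: indep_sub ix0Uy; apply: setUS; apply/subsetP => z; rewrite !inE => /andP [zS ->].
  by rewrite andbT; apply: contraNneq yS => <-.
have [a /setDP [aS aSU] ix0Sa] := indep_swap_of_proper iNS x0S (extremal_properI ext) ix0SU.
have aU : a \notin U by move: aSU; rewrite in_setI aS.
by move: (extremal_no_swap_out ext aS aU x0S ix0S); rewrite ix0Sa.
Qed.

Lemma extremal_swap S U x0 y1 : extremal S U -> x0 \notin S -> indep M (x0 |: S) ->
  y1 \in S -> y1 \in U -> indep N (x0 |: (S :\ y1)) ->
  extremal (x0 |: (S :\ y1)) (x0 |: (U :\ y1)).
Proof.
move=> ext x0S ix0S y1S y1U ix0Sy1; have [dSU maxSU] := ext; have /and3P [vS vU _] := dSU.
have [x0U ix0U] := extremal_augment_both ext x0S ix0S.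
have aSS1 := adj_swap vS x0S y1S ix0S ix0Sy1.
have aUU1 := adj_swap vU x0U y1U ix0U (extremal_swap_indep ext x0S ix0S y1U ix0Sy1).
split; first exact: disconnected_connect dSU (connect1 aSS1) (connect1 aUU1)
  (adj_vtxr aSS1) (adj_vtxr aUU1).
move=> P Q dPQ; rewrite -setUIr -setDIl cards_swap ?inE ?(negbTE x0S) ?y1S ?y1U //.
exact: maxSU.
Qed.

Section SwapStep.
Variables (S U : {set T}) (x0 y1 : T) (n : nat).
Hypotheses (x0S : x0 \notin S) (ix0S : indep M (x0 |: S)) (y1S : y1 \in S).
Hypotheses (ix0Sy1 : indep N (x0 |: (S :\ y1))) (free : swap_free S U n).

Lemma swap_free_neq j y : j <= n -> reach S U j y -> y != y1.
Proof. by move=> jn ry; apply: contraTneq ix0Sy1 => <-; exact: free jn ry x0S ix0S. Qed.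

Lemma swap_step j x y : j <= n -> reach S U j y -> x \notin S -> indep N (x |: (S :\ y)) ->
  [/\ x \notin x0 |: (S :\ y1), ~~ indep M (x |: S)
    & indep N (x |: ((x0 |: (S :\ y1)) :\ y))].
Proof.
move=> jn ry xS ixSy.
have nixS : ~~ indep M (x |: S) by apply: contraL ixSy; exact: free jn ry xS.
have xx0 : x != x0 by apply: contraNneq nixS => ->.
split=> //; first by rewrite !inE negb_or xx0 negb_and xS orbT.
apply: indep_swap_exchange => //; first exact: reach_mem ry.
- by rewrite eq_sym (swap_free_neq jn ry).
- exact: free jn ry x0S ix0S.
Qed.

Lemma reach_swap j y : j <= n -> reach S U j y ->
  reach (x0 |: (S :\ y1)) (x0 |: (U :\ y1)) j y.
Proof.
move=> jn ry; have yy1 := swap_free_neq jn ry; elim: ry jn yy1 => {j y}.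
  move=> y yS yU _ yy1; have yx0 : y != x0 by apply: contraNneq x0S => <-.
  by apply: reach0; rewrite !inE (negbTE yx0) yy1 ?yS ?(negbTE yU) ?andbF.
move=> j y x y' yS xS ixSy ixSy' ry' IH jn yy1.
have [xS1 nixS ixS1y'] := swap_step (ltnW jn) ry' xS ixSy'.
apply: (reachS (x := x) (y' := y')) => //; first by rewrite !inE yy1 yS orbT.
  apply: indep_sub (indep_swap_extend x0S xS yS ix0S nixS ixSy).
  by apply/subsetP => z; rewrite !inE; do 4 case: eqP => //=; case: (z \in S).
exact: IH (ltnW jn) (swap_free_neq (ltnW jn) ry').
Qed.
End SwapStep.

Lemma extremal_no_swap m S U y x : extremal S U -> reach S U m y ->
  x \notin S -> indep M (x |: S) -> ~~ indep N (x |: (S :\ y)).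
Proof.
elim/ltn_ind: m S U y x => m IH S U y1 x0 ext ry1 x0S ix0S.
case: m y1 / ry1 IH => [y1 y1S y1U _|n y1 x1 y' y1S x1S ix1Sy1 ix1Sy' ry' IH].
  exact: extremal_no_swap_out ext y1S y1U x0S ix0S.
have free : swap_free S U n by move=> j y x jn; exact: IH j jn S U y x ext.
apply/negP => ix0Sy1.
have y1U : y1 \in U.
  by apply: contraLR ix0Sy1 => y1U; exact: extremal_no_swap_out ext y1S y1U x0S ix0S.
have ext1 := extremal_swap ext x0S ix0S y1S y1U ix0Sy1.
have [x1S1 nix1S ix1S1y'] := swap_step x0S ix0S y1S ix0Sy1 free (leqnn n) ry' x1S ix1Sy'.
have ix1S1 : indep M (x1 |: (x0 |: (S :\ y1))).
  by rewrite setUCA; exact: indep_swap_extend.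
have ry'1 := reach_swap x0S ix0S y1S ix0Sy1 free (leqnn n) ry'.
by have := IH n (ltnSn n) _ _ y' x1 ext1 ry'1 x1S1 ix1S1; rewrite ix1S1y'.
Qed.
End ExchangeGraph.

Section RankCondition.
Variables (T : finType) (M N : matroid T) (k : nat).
Implicit Types (S U A : {set T}).
Hypothesis rank_cond : forall X : {set T},
  flat N (~: X) -> famrank (restrict N (~: X)) <= k - 1 ->
  k.+1 <= famrank (restrict M X) + famrank (restrict N (~: X)).

Lemma exists_split_augment S A : rg_vertex M N k S -> A \subset S -> #|A| < k ->
  exists x, [/\ x \notin S, indep N (x |: A) & indep M (x |: (S :\: A))].
Proof.
case/and3P=> iMS iNS /eqP cS sAS ltAk.
have iA : indep N A := indep_sub sAS iNS.
have rN := famrank_span iA.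
have := rank_cond (X := ~: span N A); rewrite setCK => /(_ (flat_span iA)) bound.
have {}bound : k.+1 <= famrank (restrict M (~: span N A)) + #|A|.
  by have := bound (ltac:(lia)); lia.
case: (pickP [pred x | [&& x \notin S, indep N (x |: A) & indep M (x |: (S :\: A))]]).
  by move=> x /and3P [xS ixA ixSA]; exists x.
move=> none; suff rM : famrank (restrict M (~: span N A)) <= #|S :\: A|.
  by move: bound rM; rewrite cardsDS // cS; lia.
apply: famrank_le; first exact: indep_sub (subsetDl S A) iMS.
move=> x; rewrite !inE negb_or negbK => /andP [xA ixA] xSA.
have xS : x \notin S by move: xSA; rewrite xA.
by have := none x; rewrite /= xS ixA /= => ->.
Qed.

Lemma no_extremal S U : ~ extremal M N k S U.
Proof.
move=> ext; have [/and3P [vS _ _] _] := ext; have /and3P [iMS iNS _] := vS.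
set R := reachable M N S U.
have pAS : S :\: R \proper S.
  have [_ [a aS aSU]] := properP (extremal_properI ext).
  apply/properP; split; [exact: subsetDl | exists a => //].
  rewrite in_setD aS andbT negbK inE; apply/asboolP; exists 0.
  by apply: reach0; move: aSU; rewrite in_setI aS.
have ltAk : #|S :\: R| < k by rewrite -(vtx_card vS) proper_card.
have [x [xS ixA ixSR]] := exists_split_augment vS (proper_sub pAS) ltAk.
rewrite setDDr setDv set0U in ixSR.
have [y /setDP [yS yA] ixSy] := indep_swap_of_proper iNS xS pAS ixA.
have /asboolP [n ry] : `[< exists n, reach M N S U n y >].
  by move: yA; rewrite in_setD yS andbT negbK inE.
have nixS : ~~ indep M (x |: S) by apply: contraL ixSy; exact: extremal_no_swap ext ry xS.
have pSRS : S :&: R \proper S.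
  by rewrite properEneq subsetIl andbT; apply: contraNneq nixS => eSR; rewrite -eSR.
have [y' /setDP [y'S y'SR] ixSy'] := indep_swap_of_proper iMS xS pSRS ixSR.
have y'R : y' \in R by rewrite inE; apply/asboolP; exists n.+1; exact: reachS ixSy' ixSy ry.
by rewrite in_setI y'S y'R in y'SR.
Qed.
End RankCondition.

Theorem theorem5p3 (T : finType) (M N : matroid T) (k : nat) :
  1 <= k ->
  (forall X : {set T},
     flat N (~: X) -> famrank (restrict N (~: X)) <= k - 1 ->
     k.+1 <= famrank (restrict M X) + famrank (restrict N (~: X))) ->
  rg_connected M N k.
Proof.
move=> _ rank_cond S U vS vU; apply/idPn => nSU.
have dSU : disconnected M N k S U by rewrite /disconnected vS vU.
have [P [Q ext]] := exists_extremal dSU.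
exact: (no_extremal rank_cond ext).
Qed.
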